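(* Let $R$ be a 2-primal ring (for instance a reduced, commutative, left duo, symmetric, reversible, IFP, PSI or semi-symmetric ring) and $M$ a projective left $R$-module. Then $\mathcal N_s(M)=\langle E_M(0)\rangle=\beta_{co}(M)=\beta(M)$. In particular the zero submodule of $M$ satisfies both the complete radical formula and the radical formula.
   Context: Rings are associative with identity; modules are unital left modules. A ring is 2-primal if its set of nilpotent elements equals its prime radical; the listed ring classes are all contained in the class of 2-primal rings. A submodule $P$ of $M$ is prime if $RM\not\subseteq P$ and for every ideal $A$ and submodule $K$ with $AK\subseteq P$, $K\subseteq P$ or $AM\subseteq P$; completely prime if $RM\not\subseteq P$ and $rm\in P$ implies $m\in P$ or $rM\subseteq P$. $\beta(M)$ (resp. $\beta_{co}(M)$) is the intersection of all prime (resp. completely prime) submodules ($=M$ if none). $E_M(0)=\{rm: r^km=0\text{ for some }k\in\mathbb N\}$, $\langle E_M(0)\rangle$ the submodule generated. A submodule $N$ satisfies the radical formula (resp. complete radical formula) if the submodule generated by $E_M(N)=\{rm: r^km\in N\text{ for some }k\}$ equals the intersection of all prime (resp. completely prime) submodules containing $N$. $\mathcal N_s(M)$ is the set of strongly nilpotent elements: $m=\sum_{i=1}^r a_im_i$ such that for each $i$ and every sequence $a_{i1}=a_i$, $a_{i,n+1}\in a_{in}Ra_{in}$, some $a_{ik}Rm_i=0$. *)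

From HB Require Import structures.
From mathcomp Require Import all_boot all_order all_algebra.
Set Implicit Arguments. Unset Strict Implicit. Unset Printing Implicit Defensive.
Import GRing.Theory.
Local Open Scope ring_scope.

Section RingDefs.
Variable R : nzRingType.

Definition is_ideal (A : R -> Prop) : Prop :=
  [/\ A 0, (forall x y, A x -> A y -> A (x + y)),
      (forall r x, A x -> A (r * x)) & (forall r x, A x -> A (x * r))].

Definition gen_ideal (S : R -> Prop) : R -> Prop :=
  fun x => forall I, is_ideal I -> (forall y, S y -> I y) -> I x.

Definition ideal_prod (A B : R -> Prop) : R -> Prop :=
  gen_ideal (fun x => exists a b, [/\ A a, B b & x = a * b]).

Definition prime_ideal (P : R -> Prop) : Prop :=
  [/\ is_ideal P, ~ (forall x, P x) &
      forall A B, is_ideal A -> is_ideal B ->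
        (forall x, ideal_prod A B x -> P x) ->
        (forall x, A x -> P x) \/ (forall x, B x -> P x)].

(* prime radical: intersection of all prime ideals (= R if there are none) *)
Definition prime_radical : R -> Prop :=
  fun x => forall P, prime_ideal P -> P x.

Definition nilpotent_el (x : R) : Prop := exists n : nat, x ^+ n = 0.

Definition two_primal : Prop :=
  forall x, nilpotent_el x <-> prime_radical x.

Section ModDefs.
Variable M : lmodType R.

Definition is_submodule (N : M -> Prop) : Prop :=
  [/\ N 0, (forall x y, N x -> N y -> N (x + y)) &
      (forall (r : R) x, N x -> N (r *: x))].

Definition gen_sub (S : M -> Prop) : M -> Prop :=
  fun m => forall N, is_submodule N -> (forall y, S y -> N y) -> N m.

Definition sub_prod (A : R -> Prop) (K : M -> Prop) : M -> Prop :=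
  gen_sub (fun m => exists a k, [/\ A a, K k & m = a *: k]).

Definition fullM : M -> Prop := fun _ => True.
Definition fullR : R -> Prop := fun _ => True.

Definition subset_of (X Y : M -> Prop) : Prop := forall m, X m -> Y m.
Definition same_set (X Y : M -> Prop) : Prop := forall m, X m <-> Y m.

Definition prime_sub (P : M -> Prop) : Prop :=
  [/\ is_submodule P, ~ subset_of (sub_prod fullR fullM) P &
      forall A K, is_ideal A -> is_submodule K ->
        subset_of (sub_prod A K) P ->
        subset_of K P \/ subset_of (sub_prod A fullM) P].

(* rM = { r m : m in M } *)
Definition completely_prime_sub (P : M -> Prop) : Prop :=
  [/\ is_submodule P, ~ subset_of (sub_prod fullR fullM) P &
      forall (r : R) (m : M), P (r *: m) ->
        P m \/ (forall m', P (r *: m'))].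

Definition beta : M -> Prop := fun m => forall P, prime_sub P -> P m.
Definition beta_co : M -> Prop :=
  fun m => forall P, completely_prime_sub P -> P m.

Definition E_M (N : M -> Prop) : M -> Prop :=
  fun x => exists (r : R) (m : M) (k : nat), x = r *: m /\ N (r ^+ k *: m).

Definition zero_sub : M -> Prop := fun m => m = 0.

Definition radical_formula (N : M -> Prop) : Prop :=
  same_set (gen_sub (E_M N))
           (fun m => forall P, prime_sub P -> subset_of N P -> P m).

Definition complete_radical_formula (N : M -> Prop) : Prop :=
  same_set (gen_sub (E_M N))
           (fun m => forall P, completely_prime_sub P -> subset_of N P -> P m).

Definition strongly_nilpotent_pair (a : R) (m : M) : Prop :=
  forall s : nat -> R, s 0%N = a ->
    (forall n, exists r, s n.+1 = s n * r * s n) ->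
    exists k, forall r, (s k * r) *: m = 0.

Definition strongly_nilpotent_elts : M -> Prop :=
  fun m => exists l : seq (R * M),
    m = \sum_(p <- l) p.1 *: p.2 /\
    (forall p, p \in l -> strongly_nilpotent_pair p.1 p.2).

End ModDefs.

Definition projective (M : lmodType R) : Prop :=
  forall (N P : lmodType R) (g : {linear N -> P}) (f : {linear M -> P}),
    (forall y : P, exists x : N, g x = y) ->
    exists h : {linear M -> N}, forall m, g (h m) = f m.

End RingDefs.

Arguments strongly_nilpotent_elts {R} M _.
Arguments beta {R} M _.
Arguments beta_co {R} M _.
Arguments zero_sub {R} M _.
Arguments two_primal R : clear implicits.

(* Over a 2-primal ring the nilpotent elements are those lying in every prime
   ideal, and a non-nilpotent x is avoided by a completely prime ideal (a
   maximal completely semiprime ideal avoiding the powers of x).  Write Nil(M)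
   for the sums of elements a m with a nilpotent.  Then
     N_s(M) ⊆ β(M) ⊆ β_co(M) ⊆ Nil(M) ⊆ ⟨E_M(0)⟩ ⊆ β_co(M),   Nil(M) ⊆ N_s(M),
   so all these sets coincide.  A strongly nilpotent pair (a, m) lies in every
   prime submodule P: if (b R) m ⊄ P, primeness applied to RbR and bRm gives
   y with (b y b R) m ⊄ P, so an a-sequence that never kills m would exist.
   Conversely a sequence a_(n+1) ∈ a_n R a_n that never vanishes is avoided by
   a prime ideal, so it vanishes when a_1 is nilpotent.  Projectivity is used
   only for β_co(M) ⊆ Nil(M): M splits off the free module F on its own
   elements, via a section h of F -> M, c ↦ Σ c_k k.  For a completely prime
   ideal Q, "all coordinates of h m lie in Q" defines a completely prime
   submodule, so for m ∈ β_co(M) every coordinate of h m lies in every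
   completely prime ideal, hence is nilpotent, and m = Σ (h m)_k k. *)

From HB Require Import structures.
From mathcomp Require Import all_boot all_order all_algebra.
From mathcomp Require Import boolp classical_sets.
From mathcomp Require Import finmap monalg.
Set Implicit Arguments. Unset Strict Implicit. Unset Printing Implicit Defensive.
Import GRing.Theory.
Local Open Scope classical_set_scope.
Local Open Scope ring_scope.

Lemma ex_maximal_chain_closed (T : Type) (G : set (set T)) :
  G !=set0 ->
  (forall F : set (set T), F `<=` G -> total_on F subset -> F !=set0 ->
     G (\bigcup_(X in F) X)) ->
  exists2 A, G A & forall B, G B -> A `<=` B -> B `<=` A.
Proof.
move=> [X0 GX0] Gchain; pose U := {X : set T | G X}.
pose le (X Y : U) := `[< sval X `<=` sval Y >].
have [||F Ftot|[A GA] Amax] := @ZL_preorder _ (exist _ X0 GX0) le.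
- by move=> X; apply/asboolP.
- by move=> X Y Z /asboolP XY /asboolP YZ; apply/asboolP => x /XY /YZ.
- have [[X FX]|F0] := pselect (F !=set0); last first.
    by exists (exist _ X0 GX0) => X FX; exfalso; apply: F0; exists X.
  have GB : G (\bigcup_(Y in sval @` F) Y).
    apply: Gchain; first by move=> _ [Y _ <-]; apply: svalP.
      move=> _ _ [Y FY <-] [Z FZ <-].
      by have [/asboolP|/asboolP] := Ftot _ _ FY FZ; [left|right].
    by exists (sval X); exists X.
  exists (exist _ _ GB) => Y FY; apply/asboolP => x Yx.
  by exists (sval Y) => //; exists Y.
- exists A => // B GB AB.
  by have /asboolP := Amax (exist _ B GB) (asboolT AB).
Qed.

Section Ideals.
Variable R : nzRingType.
Implicit Types (S I J Q A B : R -> Prop) (a b r x y : R).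

Lemma ideal0 I : is_ideal I -> I 0.
Proof. by case. Qed.

Lemma idealD I x y : is_ideal I -> I x -> I y -> I (x + y).
Proof. by case=> _ + _ _; apply. Qed.

Lemma idealMl I {r} x : is_ideal I -> I x -> I (r * x).
Proof. by case=> _ _ + _; apply. Qed.

Lemma idealMr I {r} x : is_ideal I -> I x -> I (x * r).
Proof. by case=> _ _ _; apply. Qed.

Lemma gen_ideal_ideal S : is_ideal (gen_ideal S).
Proof.
split=> [I /ideal0 //|x y Sx Sy I HI SI|r x Sx I HI SI|r x Sx I HI SI].
- by apply: idealD (Sx I HI SI) (Sy I HI SI).
- by apply: idealMl (Sx I HI SI).
- by apply: idealMr (Sx I HI SI).
Qed.

Lemma gen_ideal_incl S x : S x -> gen_ideal S x.
Proof. by move=> Sx I _; apply. Qed.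

Lemma ideal_prod_mul A B a b : A a -> B b -> ideal_prod A B (a * b).
Proof. by move=> Aa Bb; apply: gen_ideal_incl; exists a, b. Qed.

Lemma prime_radical_ideal : is_ideal (@prime_radical R).
Proof.
split=> [P [/ideal0]|x y Px Py P HP|r x Px P HP|r x Px P HP] //.
- by apply: idealD (Px P HP) (Py P HP); case: HP.
- by apply: idealMl (Px P HP); case: HP.
- by apply: idealMr (Px P HP); case: HP.
Qed.

Lemma two_primal_nilpotent_ideal : two_primal R -> is_ideal (@nilpotent_el R).
Proof.
move=> tp; have [rad0 radD radMl radMr] := prime_radical_ideal.
split=> [|x y /tp Px /tp Py|r x /tp Px|r x /tp Px]; apply/tp.
- exact: rad0.
- exact: radD Px Py.
- exact: radMl Px.
- exact: radMr Px.
Qed.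

Lemma bigcup_ideal (F : set (set R)) :
  (forall X, F X -> is_ideal X) -> total_on F subset -> F !=set0 ->
  is_ideal (\bigcup_(X in F) X).
Proof.
move=> Fid Ftot [X0 FX0]; split.
- by exists X0 => //; exact: ideal0 (Fid _ FX0).
- move=> x y [X FX Xx] [Y FY Yy]; have [XY|YX] := Ftot X Y FX FY.
    by exists Y => //; apply: idealD (XY x Xx) Yy; apply: Fid.
  by exists X => //; apply: idealD Xx (YX y Yy); apply: Fid.
- by move=> r x [X FX Xx]; exists X => //; apply: idealMl Xx; apply: Fid.
- by move=> r x [X FX Xx]; exists X => //; apply: idealMr Xx; apply: Fid.
Qed.

Definition ideal_sum I J : R -> Prop :=
  fun x => exists i j, [/\ I i, J j & x = i + j].

Lemma ideal_sum_ideal I J : is_ideal I -> is_ideal J -> is_ideal (ideal_sum I J).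
Proof.
move=> HI HJ; split.
- by exists 0, 0; rewrite addr0; split=> //; apply: ideal0.
- move=> _ _ [i [j [Ii Jj ->]]] [i' [j' [Ii' Jj' ->]]].
  by exists (i + i'), (j + j'); rewrite addrACA; split=> //; apply: idealD.
- move=> r _ [i [j [Ii Jj ->]]]; exists (r * i), (r * j).
  by rewrite mulrDr; split=> //; apply: idealMl.
- move=> r _ [i [j [Ii Jj ->]]]; exists (i * r), (j * r).
  by rewrite mulrDl; split=> //; apply: idealMr.
Qed.

Lemma ideal_sum_inl I J x : is_ideal J -> I x -> ideal_sum I J x.
Proof. by move=> HJ Ix; exists x, 0; rewrite addr0; split=> //; apply: ideal0. Qed.

Lemma ideal_sum_inr I J x : is_ideal I -> J x -> ideal_sum I J x.
Proof. by move=> HI Jx; exists 0, x; rewrite add0r; split=> //; apply: ideal0. Qed.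

Lemma ideal_sum_mul Q A B x {r} y : is_ideal Q -> is_ideal B ->
    (forall a b, A a -> B b -> Q (a * b)) ->
  ideal_sum Q A x -> ideal_sum Q B y -> Q (x * r * y).
Proof.
move=> HQ HB AB [q [a [Qq Aa ->]]] [q' [b [Qq' Bb ->]]].
rewrite -mulrA mulrDl; apply: (idealD HQ); first exact: idealMr HQ Qq.
rewrite !mulrDr; apply: (idealD HQ); first exact: idealMl HQ (idealMl HQ Qq').
exact: AB Aa (idealMl HB Bb).
Qed.

Definition msequence (s : nat -> R) := forall n, exists r, s n.+1 = s n * r * s n.

Lemma msequence_ideal_tail s I n k :
  msequence s -> is_ideal I -> I (s n) -> I (s (n + k)%N).
Proof.
move=> s_m HI Isn; elim: k => [|k IHk]; first by rewrite addn0.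
by rewrite addnS; have [r ->] := s_m (n + k)%N; exact: idealMr HI (idealMr HI IHk).
Qed.

Section MaximalAvoidingMsequence.
Variables (s : nat -> R) (Q : R -> Prop).
Hypotheses (s_m : msequence s) (Q_ideal : is_ideal Q) (Q_avoid : forall n, ~ Q (s n)).
Hypothesis Q_max :
  forall I, is_ideal I -> (forall n, ~ I (s n)) -> Q `<=` I -> I `<=` Q.

Lemma ideal_sum_meets_msequence A a :
  is_ideal A -> A a -> ~ Q a -> exists n, ideal_sum Q A (s n).
Proof.
move=> HA Aa nQa; apply: contrapT => avoid; apply: nQa.
apply: (Q_max (ideal_sum_ideal Q_ideal HA) _ _ (ideal_sum_inr Q_ideal Aa)).
- by move=> n Sn; apply: avoid; exists n.
- by move=> x; apply: ideal_sum_inl.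
Qed.

Lemma maximal_avoiding_msequence_prime : prime_ideal Q.
Proof.
split=> //; first by move=> /(_ (s 0%N)); apply: Q_avoid.
move=> A B HA HB AB_Q.
case: (pselect (A `<=` Q)) => [|/existsPNP[a Aa nQa]]; first by left.
case: (pselect (B `<=` Q)) => [|/existsPNP[b Bb nQb]]; first by right.
have [i Ai] := ideal_sum_meets_msequence HA Aa nQa.
have [j Bj] := ideal_sum_meets_msequence HB Bb nQb.
exfalso; apply: (@Q_avoid (i + j)%N.+1); have [r ->] := s_m (i + j)%N.
apply: (ideal_sum_mul (A := A) Q_ideal HB).
- by move=> a' b' Aa' Bb'; apply: AB_Q; apply: ideal_prod_mul.
- exact: msequence_ideal_tail s_m (ideal_sum_ideal Q_ideal HA) Ai.
- by rewrite addnC; apply: msequence_ideal_tail s_m (ideal_sum_ideal Q_ideal HB) Bj.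
Qed.

End MaximalAvoidingMsequence.

Lemma msequence_prime_avoiding s :
  msequence s -> (forall n, s n <> 0) -> exists2 Q, prime_ideal Q & ~ Q (s 0%N).
Proof.
move=> s_m s_neq0.
have [||Q [Q_ideal Q_avoid] Q_max] :=
  ex_maximal_chain_closed (G := fun I => is_ideal I /\ forall n, ~ I (s n)).
- exists (fun x => x = 0); split; last by move=> n /s_neq0.
  by split=> [//|x y -> ->|r x ->|r x ->]; rewrite ?addr0 ?mulr0 ?mul0r.
- move=> F FG Ftot Fne; split; first by apply: bigcup_ideal => // X /FG [].
  by move=> n [X /FG [_ /(_ n)]].
- exists Q; last exact: Q_avoid.
  by apply: maximal_avoiding_msequence_prime => // I HI avoid; apply: Q_max.
Qed.

Lemma two_primal_msequence_vanishes s : two_primal R ->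
  nilpotent_el (s 0%N) -> msequence s -> exists k, s k = 0.
Proof.
move=> tp s0_nil s_m; apply: contrapT => s_neq0.
have [Q Q_prime nQ] :=
  msequence_prime_avoiding s_m (fun n sn0 => s_neq0 (ex_intro _ n sn0)).
exact: nQ (proj1 (tp _) s0_nil Q Q_prime).
Qed.

End Ideals.

Section CompletelyPrimeIdeals.
Variable R : nzRingType.
Implicit Types (I Q : R -> Prop) (a b r x y : R).

Definition completely_semiprime I := forall y, I (y * y) -> I y.

Definition completely_prime_ideal Q :=
  [/\ is_ideal Q, ~ (forall x, Q x) & forall a b, Q (a * b) -> Q a \/ Q b].

Definition ideal_colon I b : R -> Prop := fun y => I (y * b).

Section CompletelySemiprime.
Variable I : R -> Prop.
Hypotheses (I_ideal : is_ideal I) (I_csp : completely_semiprime I).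

Lemma csp_mulC a b : I (a * b) -> I (b * a).
Proof.
move=> Iab; apply: I_csp.
have -> : b * a * (b * a) = b * (a * b) * a by rewrite !mulrA.
exact: idealMr I_ideal (idealMl I_ideal Iab).
Qed.

Lemma csp_mul_mid a r b : I (a * b) -> I (a * r * b).
Proof.
move=> Iab; apply: I_csp.
have -> : a * r * b * (a * r * b) = a * r * (b * a) * (r * b) by rewrite !mulrA.
exact: idealMr I_ideal (idealMl I_ideal (csp_mulC Iab)).
Qed.

Lemma ideal_colon_ideal b : is_ideal (ideal_colon I b).
Proof.
rewrite /ideal_colon; split=> [|x y Ix Iy|r x Ix|r x Ix].
- by rewrite mul0r; apply: ideal0.
- by rewrite mulrDl; apply: idealD.
- by rewrite -mulrA; apply: idealMl.
- exact: csp_mul_mid.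
Qed.

Lemma ideal_colon_csp b : completely_semiprime (ideal_colon I b).
Proof.
move=> y Iyyb; apply: I_csp.
have -> : y * b * (y * b) = y * b * y * b by rewrite !mulrA.
by apply: idealMr I_ideal (csp_mulC _); rewrite mulrA.
Qed.

Lemma ideal_colon_incl b : I `<=` ideal_colon I b.
Proof. by move=> x Ix; apply: idealMr I_ideal Ix. Qed.

End CompletelySemiprime.

Section MaximalCompletelySemiprimeAvoidingPowers.
Variables (x : R) (Q : R -> Prop).
Hypotheses (Q_ideal : is_ideal Q) (Q_csp : completely_semiprime Q).
Hypothesis Q_avoid : forall n, ~ Q (x ^+ n).
Hypothesis Q_max : forall I, is_ideal I -> completely_semiprime I ->
  (forall n, ~ I (x ^+ n)) -> Q `<=` I -> I `<=` Q.

Lemma ideal_colon_meets_powers a b : Q (a * b) -> ~ Q a -> exists n, Q (x ^+ n * b).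
Proof.
move=> Qab nQa; apply: contrapT => avoid; apply: nQa.
apply: (Q_max (ideal_colon_ideal Q_ideal Q_csp b)
  (ideal_colon_csp Q_ideal Q_csp (b := b)) _ (ideal_colon_incl Q_ideal b) Qab).
by move=> n Qxnb; apply: avoid; exists n.
Qed.

Lemma maximal_csp_avoiding_powers_completely_prime : completely_prime_ideal Q.
Proof.
split=> //; first by move=> /(_ (x ^+ 0)); apply: Q_avoid.
move=> a b Qab; apply: contrapT => /not_orP[nQa nQb].
have [n Qxnb] := ideal_colon_meets_powers Qab nQa.
have [m Qxmxn] := ideal_colon_meets_powers (csp_mulC Q_ideal Q_csp Qxnb) nQb.
by apply: (@Q_avoid (m + n)%N); rewrite exprD.
Qed.

End MaximalCompletelySemiprimeAvoidingPowers.

Lemma two_primal_completely_prime_avoiding x :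
  two_primal R -> ~ nilpotent_el x -> exists2 Q, completely_prime_ideal Q & ~ Q x.
Proof.
move=> tp x_nil.
have [||Q [Q_ideal Q_csp Q_avoid] Q_max] := ex_maximal_chain_closed
  (G := fun I => [/\ is_ideal I, completely_semiprime I & forall n, ~ I (x ^+ n)]).
- exists (@nilpotent_el R); split; first exact: two_primal_nilpotent_ideal.
  + by move=> y [n yyn]; exists (2 * n)%N; rewrite exprM expr2.
  + by move=> n [k xnk]; apply: x_nil; exists (n * k)%N; rewrite exprM.
- move=> F FG Ftot Fne; split.
  + by apply: bigcup_ideal => // X /FG [].
  + by move=> y [X FX Xyy]; exists X => //; have [_ + _] := FG X FX; apply.
  + by move=> n [X /FG [_ _ /(_ n)]].
- exists Q; last by move=> Qx; apply: (@Q_avoid 1%N); rewrite expr1.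
  apply: maximal_csp_avoiding_powers_completely_prime => // I HI Icsp avoid.
  exact: Q_max.
Qed.

End CompletelyPrimeIdeals.

Section Submodules.
Variables (R : nzRingType) (M : lmodType R).
Implicit Types (N P K S : M -> Prop) (A : R -> Prop) (a b r : R) (m : M).

Lemma submodule0 N : is_submodule N -> N 0.
Proof. by case. Qed.

Lemma submoduleD N x y : is_submodule N -> N x -> N y -> N (x + y).
Proof. by case=> _ + _; apply. Qed.

Lemma submoduleZ N {r} x : is_submodule N -> N x -> N (r *: x).
Proof. by case=> _ _; apply. Qed.

Lemma submodule_sum N (I : eqType) (l : seq I) (F : I -> M) :
  is_submodule N -> (forall i, i \in l -> N (F i)) -> N (\sum_(i <- l) F i).
Proof.
move=> HN NF; rewrite big_seq; apply: big_ind => //; first exact: submodule0.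
by move=> x y; apply: submoduleD.
Qed.

Lemma gen_sub_submodule S : is_submodule (gen_sub S).
Proof.
split=> [N /submodule0 //|x y Sx Sy N HN SN|r x Sx N HN SN].
- exact: submoduleD HN (Sx N HN SN) (Sy N HN SN).
- exact: submoduleZ HN (Sx N HN SN).
Qed.

Lemma gen_sub_incl S m : S m -> gen_sub S m.
Proof. by move=> Sm N _; apply. Qed.

Lemma sub_prod_scale A K a k : A a -> K k -> sub_prod A K (a *: k).
Proof. by move=> Aa Kk; apply: gen_sub_incl; exists a, k. Qed.

Lemma sub_prod_full m : sub_prod (@fullR R) (@fullM R M) m.
Proof. by rewrite -[m]scale1r; apply: sub_prod_scale. Qed.

Lemma beta_co_submodule : is_submodule (beta_co M).
Proof.
split=> [P [/submodule0 //]|x y Px Py P HP|r x Px P HP].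
- by apply: submoduleD (Px P HP) (Py P HP); case: HP.
- by apply: submoduleZ (Px P HP); case: HP.
Qed.

Lemma forall_over_zero_sub (Pr : (M -> Prop) -> Prop) m :
    (forall P, Pr P -> is_submodule P) ->
  (forall P, Pr P -> subset_of (zero_sub M) P -> P m) <-> (forall P, Pr P -> P m).
Proof.
move=> Pr_sub; split=> Pm P PrP; last by move=> _; apply: Pm.
by apply: Pm => // _ ->; apply: submodule0 (Pr_sub P PrP).
Qed.

Lemma completely_prime_sub_prime P : completely_prime_sub P -> prime_sub P.
Proof.
case=> HP HnP Hcp; split=> // A K HA HK AK_P.
case: (pselect (subset_of K P)) => [|/existsPNP[k Kk nPk]]; [by left | right].
move=> m; apply=> // _ [a [m' [Aa _ ->]]].
by have /Hcp[//|] := AK_P _ (sub_prod_scale Aa Kk).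
Qed.

Lemma beta_sub_beta_co m : beta M m -> beta_co M m.
Proof. by move=> m_beta P /completely_prime_sub_prime; apply: m_beta. Qed.

Lemma completely_prime_sub_root P r m k :
  completely_prime_sub P -> P (r ^+ k *: m) -> P (r *: m).
Proof.
case=> HP _ Hcp; elim: k m => [|k IHk] m.
  by rewrite expr0 scale1r; apply: submoduleZ.
by rewrite exprS -scalerA => /Hcp[/IHk|]; last apply.
Qed.

Lemma E0_beta_co m : gen_sub (E_M (zero_sub M)) m -> beta_co M m.
Proof.
apply; first exact: beta_co_submodule.
move=> _ [r [m' [k [-> rkm0]]]] P HP.
apply: (completely_prime_sub_root (k := k) HP); rewrite rkm0.
by case: HP => /submodule0.
Qed.

Section PrimeSubmodule.
Variables (P : M -> Prop) (m : M).
Hypothesis P_prime : prime_sub P.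

Lemma prime_sub_msequence_step b : (exists r, ~ P ((b * r) *: m)) ->
  exists (y r : R), ~ P ((b * y * b * r) *: m).
Proof.
case: P_prime => P_sub _ P_pr [r0 nPbr0]; apply: contrapT => stuck.
(* Otherwise A := RbR and K := bRm satisfy AK ⊆ P, contradicting primeness. *)
have bRb_P (y r : R) : P ((b * y * b * r) *: m).
  by apply: contrapT => nP; apply: stuck; exists y, r.
pose A := gen_ideal (fun a => a = b).
pose K := gen_sub (fun k => exists z, k = (b * z) *: m).
pose Ab a := forall y z : R, P ((a * y * b * z) *: m).
have Ab_ideal : is_ideal Ab.
  split=> [y z|a1 a2 H1 H2 y z|r a1 H1 y z|r a1 H1 y z].
  - by rewrite !mul0r scale0r; apply: submodule0.
  - by rewrite !mulrDl scalerDl; apply: submoduleD.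
  - by rewrite -!mulrA -scalerA !mulrA; apply: submoduleZ.
  - by rewrite -(mulrA a1); apply: H1.
have A_Ab a : A a -> Ab a by apply=> // _ ->; apply: bRb_P.
pose KA k := forall a, A a -> P (a *: k).
have KA_sub : is_submodule KA.
  split=> [a _|k1 k2 H1 H2 a Aa|r k1 H1 a Aa].
  - by rewrite scaler0; apply: submodule0.
  - by rewrite scalerDr; apply: submoduleD (H1 a Aa) (H2 a Aa).
  - by rewrite scalerA; apply: H1; apply: idealMr (gen_ideal_ideal _) Aa.
have K_KA k : K k -> KA k.
  apply=> // _ [z ->] a Aa.
  by have := A_Ab a Aa 1 z; rewrite mulr1 scalerA mulrA.
case: (P_pr A K (gen_ideal_ideal _) (gen_sub_submodule _)).
- by move=> x; apply=> // _ [a [k [Aa Kk ->]]]; apply: K_KA.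
- by move=> K_sub; apply: nPbr0; apply: K_sub; apply: gen_sub_incl; exists r0.
- move=> AM_sub; apply: nPbr0; rewrite -scalerA; apply: AM_sub.
  exact: sub_prod_scale (gen_ideal_incl _) _.
Qed.

Lemma strongly_nilpotent_pair_prime_sub a : strongly_nilpotent_pair a m -> P (a *: m).
Proof.
move=> a_sn; apply: contrapT => nPam.
have step b : exists y, (exists r, ~ P ((b * r) *: m)) ->
    exists r, ~ P ((b * y * b * r) *: m).
  case: (pselect (exists r, ~ P ((b * r) *: m))) => [|b_stuck]; last by exists 0.
  by move=> /prime_sub_msequence_step[y b_escapes]; exists y.
have [f f_step] := choice step.
pose s n := iter n (fun b => b * f b * b) a.
have s_escapes n : exists r, ~ P ((s n * r) *: m).
  by elim: n => [|n IHn]; [exists 1; rewrite mulr1 | exact: f_step].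
have [k sk0] := a_sn s erefl (fun n => ex_intro _ (f (s n)) erefl).
have [r] := s_escapes k; rewrite sk0; apply.
by case: P_prime => /submodule0.
Qed.

End PrimeSubmodule.

Lemma strongly_nilpotent_beta m : strongly_nilpotent_elts M m -> beta M m.
Proof.
move=> [l [-> l_sn]] P P_prime; apply: submodule_sum; first by case: P_prime.
by move=> p /l_sn; apply: strongly_nilpotent_pair_prime_sub.
Qed.

Definition nil_lincomb : M -> Prop := fun m => exists l : seq (R * M),
  m = \sum_(p <- l) p.1 *: p.2 /\ forall p, p \in l -> nilpotent_el p.1.

Lemma nil_lincomb_E0 m : nil_lincomb m -> gen_sub (E_M (zero_sub M)) m.
Proof.
move=> [l [-> l_nil]]; apply: submodule_sum; first exact: gen_sub_submodule.
move=> p /l_nil [n pn0]; apply: gen_sub_incl.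
by exists p.1, p.2, n; rewrite /zero_sub pn0 scale0r.
Qed.

Lemma nil_lincomb_strongly_nilpotent m :
  two_primal R -> nil_lincomb m -> strongly_nilpotent_elts M m.
Proof.
move=> tp [l [-> l_nil]]; exists l; split=> // p /l_nil p_nil s s0 s_m.
rewrite -s0 in p_nil; have [k sk0] := two_primal_msequence_vanishes tp p_nil s_m.
by exists k => r; rewrite sk0 mul0r scale0r.
Qed.

End Submodules.

Section FreeModuleOnElements.
Variables (R : nzRingType) (M : lmodType R).

Definition lincomb (x : {malg R[M]}) : M := \sum_(k <- msupp x) x@_k *: k.

Lemma lincomb_fsubset (x : {malg R[M]}) (D : {fset M}) :
  (msupp x `<=` D)%fset -> lincomb x = \sum_(k <- D) x@_k *: k.
Proof.
move=> x_D; apply: big_fset_incl => // k _.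
by move=> /mcoeff_outdom ->; rewrite scale0r.
Qed.

Lemma lincomb_is_linear : linear lincomb.
Proof.
move=> c x y; have x_y_supp : (msupp (c *: x + y) `<=` msupp x `|` msupp y)%fset.
  by apply: fsubset_trans (msuppD_le _ _) _; apply/fsetSU/msuppZ_le.
rewrite (lincomb_fsubset x_y_supp) (lincomb_fsubset (fsubsetUl _ (msupp y))).
rewrite (lincomb_fsubset (fsubsetUr (msupp x) _)) scaler_sumr -big_split /=.
by apply: eq_bigr => k _; rewrite mcoeffD mcoeffZ scalerDl scalerA.
Qed.

HB.instance Definition _ :=
  GRing.isLinear.Build R {malg R[M]} M *:%R lincomb lincomb_is_linear.

Lemma lincombU m : lincomb << 1 *g m >> = m.
Proof. by rewrite /lincomb msuppU oner_eq0 big_seq_fset1 mcoeffUU scale1r. Qed.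

Lemma coeff_preimage_completely_prime (K : choiceType)
    (h : {linear M -> {malg R[K]}}) Q m0 :
  completely_prime_ideal Q -> ~ (forall k, Q (h m0)@_k) ->
  completely_prime_sub (fun m => forall k, Q (h m)@_k).
Proof.
case=> Q_ideal _ Q_cp nQm0; split.
- split=> [k|x y Qx Qy k|r x Qx k].
  + by rewrite linear0 mcoeff0; apply: ideal0.
  + by rewrite linearD mcoeffD; apply: idealD.
  + by rewrite linearZ mcoeffZ; apply: idealMl.
- by move=> Q_full; apply: nQm0; apply: Q_full; apply: sub_prod_full.
- move=> r m Qrm; case: (pselect (forall k, Q (h m)@_k)) => [|/existsNP[k nQk]].
    by left.
  have /Q_cp[Qr|//] : Q (r * (h m)@_k) by rewrite -mcoeffZ -linearZ.
  by right=> m' k'; rewrite linearZ mcoeffZ; apply: idealMr.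
Qed.

Lemma beta_co_coeff_nilpotent (K : choiceType) (h : {linear M -> {malg R[K]}}) m k :
  two_primal R -> beta_co M m -> nilpotent_el (h m)@_k.
Proof.
move=> tp m_beta; apply: contrapT.
move=> /(two_primal_completely_prime_avoiding tp)[Q Q_cp nQ].
have hQ_cp := coeff_preimage_completely_prime Q_cp (fun Qhm => nQ (Qhm k)).
exact: nQ (m_beta _ hQ_cp k).
Qed.

Lemma projective_beta_co_nil_lincomb m :
  two_primal R -> projective M -> beta_co M m -> nil_lincomb m.
Proof.
move=> tp M_proj m_beta.
have [h hK] := M_proj _ _ (lincomb : {linear _ -> M}) (idfun : {linear M -> M})
  (fun y => ex_intro _ _ (lincombU y)).
exists [seq ((h m)@_k, k) | k <- msupp (h m)]; split; first by rewrite big_map -[LHS]hK.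
by move=> _ /mapP[k _ ->]; apply: beta_co_coeff_nilpotent.
Qed.

End FreeModuleOnElements.

Theorem corollary4p11 (R : nzRingType) (M : lmodType R) :
  two_primal R -> projective M ->
  [/\ same_set (strongly_nilpotent_elts M) (gen_sub (E_M (zero_sub M))),
      same_set (gen_sub (E_M (zero_sub M))) (beta_co M),
      same_set (beta_co M) (beta M),
      complete_radical_formula (zero_sub M) &
      radical_formula (zero_sub M)].
Proof.
move=> tp M_proj.
have beta_co_nil m := projective_beta_co_nil_lincomb (m := m) tp M_proj.
have Ns_nil m : strongly_nilpotent_elts M m <-> nil_lincomb m.
  split=> [/strongly_nilpotent_beta/beta_sub_beta_co/beta_co_nil //|].
  exact: nil_lincomb_strongly_nilpotent.
have E0_nil m : gen_sub (E_M (zero_sub M)) m <-> nil_lincomb m.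
  by split=> [/E0_beta_co/beta_co_nil|/nil_lincomb_E0].
have co_nil m : beta_co M m <-> nil_lincomb m.
  by split=> [/beta_co_nil|/nil_lincomb_E0/E0_beta_co].
have beta_nil m : beta M m <-> nil_lincomb m.
  split=> [/beta_sub_beta_co/beta_co_nil //|].
  by move=> /(nil_lincomb_strongly_nilpotent tp)/strongly_nilpotent_beta.
split=> m.
- by rewrite Ns_nil E0_nil.
- by rewrite E0_nil co_nil.
- by rewrite co_nil beta_nil.
- by rewrite E0_nil -co_nil; symmetry; apply: forall_over_zero_sub => P [].
- by rewrite E0_nil -beta_nil; symmetry; apply: forall_over_zero_sub => P [].
Qed.
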